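(* For every algebraic type $\tau$, $$\mathsf{CA}_\tau=\mathbb{I}\,\mathsf{RCA}_\tau=\mathbb{I}\,\mathsf{FCA}_\tau=\mathbb{H}\mathbb{S}\mathbb{P}(\mathsf{FiCA}_\tau)=\mathbb{H}\mathbb{S}\mathbb{P}(\mathsf{BLK}_\tau).$$ That is: every clone $\tau$-algebra is isomorphic to a point-relativized functional clone $\tau$-algebra and to a functional clone $\tau$-algebra, and the variety of clone $\tau$-algebras is generated both by its finite dimensional members and by the class of block $\tau$-algebras.
   Context: Let $\omega=\{1,2,3,\dots\}$. Fix an algebraic type $\tau$. A clone $\tau$-algebra is an algebra $\mathbf C=(C,\sigma^{\mathbf C}\ (\sigma\in\tau),q_n^{\mathbf C}\ (n\ge 0),\mathsf e_i^{\mathbf C}\ (i\ge1))$ where each $\mathsf e_i$ is a nullary operation, each $q_n$ has arity $n+1$, and the following identities hold: (C1) $q_n(\mathsf e_i,x_1,\dots,x_n)=x_i$ for $1\le i\le n$; (C2) $q_n(\mathsf e_j,x_1,\dots,x_n)=\mathsf e_j$ for $j>n$; (C3) $q_n(x,\mathsf e_1,\dots,\mathsf e_n)=x$ for $n\ge0$; (C4) $q_k(x,y_1,\dots,y_k)=q_n(x,y_1,\dots,y_k,\mathsf e_{k+1},\dots,\mathsf e_n)$ for $n>k$; (C5) $q_n(q_n(x,y_1,\dots,y_n),z_1,\dots,z_n)=q_n(x,q_n(y_1,z_1,\dots,z_n),\dots,q_n(y_n,z_1,\dots,z_n))$; (C6) $q_n(\sigma(x_1,\dots,x_k),y_1,\dots,y_n)=\sigma(q_n(x_1,y_1,\dots,y_n),\dots,q_n(x_k,y_1,\dots,y_n))$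 for every $\sigma\in\tau$ of arity $k$ and every $n\ge0$. $\mathsf{CA}_\tau$ is the class of clone $\tau$-algebras. An element $a$ is independent of $\mathsf e_n$ if $q_n(a,\mathsf e_1,\dots,\mathsf e_{n-1},\mathsf e_{n+1})=a$, and dependent on $\mathsf e_n$ otherwise. Let $\Gamma(a)=\{i: a\text{ dependent on }\mathsf e_i\}$ and the dimension $\gamma(a)$ be $\omega$ if $\Gamma(a)$ is infinite, $0$ if $\Gamma(a)=\emptyset$, and $\max\Gamma(a)$ otherwise. $\mathbf C$ is finite dimensional if $\gamma(a)<\omega$ for all $a\in C$; $\mathsf{FiCA}_\tau$ is the class of finite dimensional clone $\tau$-algebras. For a set $A$, $r\in A^\omega$ and $a_1,\dots,a_n\in A$, let $r[a_1,\dots,a_n]\in A^\omega$ have $i$-th entry $a_i$ for $i\le n$ and $r_i$ for $i>n$. For a $\tau$-algebra $\mathbf A$, the full functional clone $\tau$-algebra with value domain $\mathbf A$ has universe the set of all functions $A^\omega\to A$ and operations $\mathsf e_i(s)=s_i$, $q_n(\varphi,\psi_1,\dots,\psi_n)(s)=\varphi(s[\psi_1(s),\dots,\psi_n(s)])$, $\sigma(\psi_1,\dots,\psi_n)(s)=\sigma^{\mathbf A}(\psi_1(s),\dots,\psi_n(s))$ for $s\in A^\omega$; its subalgebras (over all $\tau$-algebras $\mathbf A$) form the class $\mathsf{FCA}_\tau$ of functional clone $\tau$-algebras. For $r\in A^\omega$ let $A^\omega_r=\{s\in A^\omega: s_i\neq r_i\text{ for only finitely many }i\}$; the full point-relativized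 functional clone $\tau$-algebra with value domain $\mathbf A$ and thread $r$ has universe all functions $A^\omega_r\to A$ with the same defining formulas (for $s\in A^\omega_r$); its subalgebras form the class $\mathsf{RCA}_\tau$. For a finitary operation $f:A^n\to A$ ($n\ge0$) its top extension is $f^\top:A^\omega\to A$, $f^\top(s)=f(s_1,\dots,s_n)$. $\mathsf{BLK}_\tau$ (block algebras) is the class of subalgebras of full functional clone $\tau$-algebras (with value domain some $\tau$-algebra $\mathbf A$) all of whose elements are top extensions of finitary operations on $A$. $\mathbb I,\mathbb H,\mathbb S,\mathbb P$ denote closure under isomorphic copies, homomorphic images, subalgebras and direct products. *)

From mathcomp Require Import all_boot.
Set Implicit Arguments.
Unset Strict Implicit.
Unset Printing Implicit Defensive.

(* Conventions: indices are 0-based.  For k : nat, [ce C k] is e_{k+1};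
   a point s : nat -> A of A^omega has i-th entry (1-based) s (i-1). *)

Record alg_type := AlgType { op_sym : Type; arity : op_sym -> nat }.

Record algebra (T : alg_type) := Algebra {
  carrier :> Type;
  interp : forall o : op_sym T, (arity o).-tuple carrier -> carrier }.
Arguments interp {T} _ _ _.

Definition is_hom T (A B : algebra T) (f : A -> B) : Prop :=
  forall o (xs : (arity o).-tuple A), f (interp A o xs) = interp B o (map_tuple f xs).

Definition alg_class T := algebra T -> Prop.

(** Closure operators I, H, S, P (S and P taken up to isomorphism;
    this does not affect H S P). *)
Definition Icl T (K : alg_class T) : alg_class T := fun B =>
  exists A : algebra T, K A /\ exists f : A -> B, is_hom f /\ bijective f.
Definition Hcl T (K : alg_class T) : alg_class T := fun B =>
  exists A : algebra T, K A /\ exists f : A -> B, is_hom f /\ (forall b, exists a, f a = b).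
Definition Scl T (K : alg_class T) : alg_class T := fun B =>
  exists A : algebra T, K A /\ exists f : B -> A, is_hom f /\ injective f.
Definition prod_alg T (I : Type) (A : I -> algebra T) : algebra T :=
  @Algebra T (forall i, A i)
    (fun o xs i => interp (A i) o (map_tuple (fun x => x i) xs)).
Definition Pcl T (K : alg_class T) : alg_class T := fun B =>
  exists (I : Type) (A : I -> algebra T), (forall i, K (A i)) /\
    exists f : prod_alg A -> B, is_hom f /\ bijective f.

Definition clone_sym (t : alg_type) := (op_sym t + (nat + nat))%type.
Definition clone_arity t (o : clone_sym t) : nat :=
  match o with inl s => arity s | inr (inl n) => n.+1 | inr (inr _) => 0 end.
(* inl s = sigma in tau;  inr (inl n) = q_n (arity n+1);  inr (inr k) = e_{k+1} *)
Definition clone_type t : alg_type := @AlgType (clone_sym t) (@clone_arity t).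

Definition cop t (C : algebra (clone_type t)) (s : op_sym t)
  (xs : (arity s).-tuple C) : C := interp C (inl s) xs.
Definition cq t (C : algebra (clone_type t)) (n : nat) (x : C) (ys : n.-tuple C) : C :=
  interp C (inr (inl n)) (cons_tuple x ys).
Definition ce t (C : algebra (clone_type t)) (k : nat) : C :=
  interp C (inr (inr k)) [tuple].
Arguments ce {t} C k.
Arguments cq {t C} n x ys.
Arguments cop {t C} s xs.

Definition CA t : alg_class (clone_type t) := fun C =>
  (forall n (xs : n.-tuple C) (i : 'I_n), cq n (ce C i) xs = tnth xs i) /\
  (forall n (xs : n.-tuple C) (j : nat), n <= j -> cq n (ce C j) xs = ce C j) /\
  (forall n (x : C), cq n x [tuple ce C i | i < n] = x) /\
  (forall k n (x : C) (ys : k.-tuple C), k < n ->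
              cq k x ys = cq n x [tuple nth (ce C i) ys i | i < n]) /\
  (forall n (x : C) (ys zs : n.-tuple C),
              cq n (cq n x ys) zs = cq n x (map_tuple (fun y => cq n y zs) ys)) /\
  (forall (s : op_sym t) (xs : (arity s).-tuple C) n (ys : n.-tuple C),
              cq n (cop s xs) ys = cop s (map_tuple (fun x => cq n x ys) xs)).

(* a is independent of e_{k+1}:  q_{k+1}(a, e_1,...,e_k, e_{k+2}) = a *)
Definition indep t (C : algebra (clone_type t)) (a : C) (k : nat) : Prop :=
  cq k.+1 a [tuple (if i < k then ce C i else ce C k.+1) | i < k.+1] = a.

Definition FiCA t : alg_class (clone_type t) := fun C =>
  CA C /\ forall a : C, exists N, forall k, N <= k -> indep a k.

Definition upd (A : Type) (s : nat -> A) n (xs : n.-tuple A) : nat -> A :=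
  fun k => nth (s k) xs k.

Definition fun_alg t (A : algebra t) (D : (nat -> A) -> Prop)
  (HD : forall s n (xs : n.-tuple A), D s -> D (upd s xs)) : algebra (clone_type t) :=
  @Algebra (clone_type t) ({s | D s} -> A)
   (fun o => match o return (clone_arity o).-tuple ({s | D s} -> A) -> ({s | D s} -> A) with
     | inl sg => fun fs s => interp A sg (map_tuple (fun f => f s) fs)
     | inr (inl n) => fun fs s =>
         thead fs (exist _ (upd (proj1_sig s) (map_tuple (fun f => f s) (behead_tuple fs)))
                          (HD _ _ _ (proj2_sig s)))
     | inr (inr k) => fun _ s => proj1_sig s k
     end).

Lemma upd_True (A : Type) (s : nat -> A) n (xs : n.-tuple A) : True -> True.
Proof. by []. Qed.

Definition full_fca t (A : algebra t) : algebra (clone_type t) :=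
  @fun_alg t A (fun _ => True) (@upd_True A).

Definition rel_dom (A : Type) (r : nat -> A) (s : nat -> A) : Prop :=
  exists N, forall k, N <= k -> s k = r k.

Lemma rel_dom_upd (A : Type) (r : nat -> A) (s : nat -> A) n (xs : n.-tuple A) :
  rel_dom r s -> rel_dom r (upd s xs).
Proof.
case=> N HN; exists (maxn N n) => k Hk; rewrite /upd nth_default.
  by apply: HN; apply: leq_trans Hk; apply: leq_maxl.
by rewrite size_tuple; apply: leq_trans Hk; apply: leq_maxr.
Qed.

Definition full_rca t (A : algebra t) (r : nat -> A) : algebra (clone_type t) :=
  @fun_alg t A (rel_dom r) (@rel_dom_upd A r).
Arguments full_rca {t} A r.
Arguments full_fca {t} A.

Definition FCA t : alg_class (clone_type t) := fun B =>
  exists (A : algebra t) (f : B -> full_fca A), is_hom f /\ injective f.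
Definition RCA t : alg_class (clone_type t) := fun B =>
  exists (A : algebra t) (r : nat -> A) (f : B -> full_rca A r), is_hom f /\ injective f.
Definition BLK t : alg_class (clone_type t) := fun B =>
  exists (A : algebra t) (f : B -> full_fca A), is_hom f /\ injective f /\
    forall b : B, exists n (g : n.-tuple A -> A),
      forall s, f b s = g [tuple proj1_sig s i | i < n].

From mathcomp Require Import all_boot.
From Stdlib Require Import ClassicalEpsilon FunctionalExtensionality.
From Stdlib Require Import PropExtensionality ProofIrrelevance.
Set Implicit Arguments.
Unset Strict Implicit.
Unset Printing Implicit Defensive.

(* Functional clone algebras satisfy (C1)-(C6), and identities are preserved by
   isomorphic copies, subalgebras, products and homomorphic images; this gives
   every inclusion into CA.

   Conversely, let C be a clone algebra and B the set of germs of sequences in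
   C^omega modulo eventual equality, with the tau-operations of C acting
   pointwise.  The map sending a to s |-> germ of (j |-> q_j(a, s_1(j), ..., s_j(j)))
   is a clone homomorphism from C into the full functional clone algebra over B:
   in the q_n case, (C4) and (C5) give, for N > n,
     q_N(q_n(a, b), u) = q_N(a, q_N(b_1, u), ..., q_N(b_n, u), u_{n+1}, ..., u_N).
   At the thread r = (germ of e_i)_i it takes the value germ of the constant a,
   by (C3); hence it is injective, even after restriction to B^omega_r.

   For the varieties, the functions C^omega -> C depending on finitely many
   coordinates form a finite dimensional block algebra Fin.  The approximants
   a_N = (s |-> q_N(a, s_1, ..., s_N)) of a in Fin commute with the operations
   for N large enough and determine a by (C3).  So the sequences in Fin^omega
   that are eventually of the form (a_N)_N form a subalgebra, which maps onto C
   by sending a sequence to the element it approximates. *)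

Lemma proj1_sig_inj (T : Type) (P : T -> Prop) : injective (@proj1_sig T P).
Proof. exact: eq_sig_hprop (fun x => @proof_irrelevance (P x)). Qed.

Lemma nth_mktuple (T : Type) n (f : 'I_n -> T) x0 k (lt_kn : k < n) :
  nth x0 [tuple f i | i < n] k = f (Ordinal lt_kn).
Proof. by rewrite -[k]/(nat_of_ord (Ordinal lt_kn)) -tnth_nth tnth_mktuple. Qed.

Lemma nth_tuple_default (T : Type) n (xs : n.-tuple T) x0 k : n <= k -> nth x0 xs k = x0.
Proof. by move=> le_nk; rewrite nth_default // size_tuple. Qed.

Lemma surj_map_tuple (A B : Type) (f : A -> B) : (forall b, exists a, f a = b) ->
  forall n (ys : n.-tuple B), exists xs : n.-tuple A, ys = map_tuple f xs.
Proof.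
move=> f_surj n ys.
have [g gK] : {g : B -> A | forall b, f (g b) = b}.
  by exists (fun b => sval (constructive_indefinite_description _ (f_surj b))) => b;
     case: constructive_indefinite_description.
by exists (map_tuple g ys); apply: eq_from_tnth => i; rewrite !tnth_map gK.
Qed.

Definition eventually (Q : nat -> Prop) := exists N, forall k, N <= k -> Q k.

Lemma eventually_mono (Q Q' : nat -> Prop) :
  (forall k, Q k -> Q' k) -> eventually Q -> eventually Q'.
Proof. by move=> QQ' [N QN]; exists N => k /QN /QQ'. Qed.

Lemma eventually_and (Q Q' : nat -> Prop) :
  eventually Q -> eventually Q' -> eventually (fun k => Q k /\ Q' k).
Proof.
move=> [N QN] [M QM]; exists (maxn N M) => k; rewrite geq_max => /andP[leNk leMk].
by split; [apply: QN | apply: QM].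
Qed.

Lemma eventually_ge n : eventually (fun k => n <= k).
Proof. by exists n. Qed.

Lemma eventually_forall m (Q : 'I_m -> nat -> Prop) :
  (forall i, eventually (Q i)) -> eventually (fun k => forall i, Q i k).
Proof.
move=> QP; pose N i := sval (constructive_indefinite_description _ (QP i)).
exists (\max_i N i) => k le_k i; have le_Nk := leq_trans (leq_bigmax i) le_k.
by move: le_Nk; rewrite /N; case: constructive_indefinite_description => Ni QNi /QNi.
Qed.

Lemma id_hom T (A : algebra T) : is_hom (fun x : A => x).
Proof. by move=> o xs; congr (interp A o _); apply: eq_from_tnth => i; rewrite tnth_map. Qed.

Lemma comp_hom T (A B C : algebra T) (f : A -> B) (g : B -> C) :
  is_hom f -> is_hom g -> is_hom (fun x => g (f x)).
Proof.
move=> hom_f hom_g o xs; rewrite hom_f hom_g; congr (interp C o _).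
by apply: eq_from_tnth => i; rewrite !tnth_map.
Qed.

Section Subalgebra.
Variables (T : alg_type) (A : algebra T) (P : A -> Prop).
Hypothesis P_closed :
  forall o (xs : (arity o).-tuple A), (forall i, P (tnth xs i)) -> P (interp A o xs).

Lemma sub_alg_closed o (xs : (arity o).-tuple {x | P x}) :
  P (interp A o (map_tuple (@proj1_sig _ _) xs)).
Proof. by apply: P_closed => i; rewrite tnth_map; apply: proj2_sig. Qed.

Definition sub_alg : algebra T :=
  @Algebra T {x | P x} (fun o xs => exist P _ (sub_alg_closed xs)).

Lemma sub_alg_val_hom : is_hom (fun x : sub_alg => proj1_sig x : A).
Proof. by []. Qed.

End Subalgebra.

Section CloneHom.
Variables (t : alg_type) (A B : algebra (clone_type t)) (f : A -> B).
Hypothesis hom_f : is_hom f.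

Lemma hom_ce k : f (ce A k) = ce B k.
Proof. by rewrite /ce hom_f; congr (interp B _ _); apply: tuple0. Qed.

Lemma hom_cq n x (ys : n.-tuple A) : f (cq n x ys) = cq n (f x) (map_tuple f ys).
Proof. by rewrite /cq hom_f; congr (interp B _ _); apply: val_inj. Qed.

Lemma hom_cop s xs : f (cop s xs) = cop s (map_tuple f xs).
Proof. by rewrite /cop hom_f. Qed.

Lemma map_hom_ce n : map_tuple f [tuple ce A i | i < n] = [tuple ce B i | i < n].
Proof. by apply: eq_from_tnth => i; rewrite tnth_map !tnth_mktuple hom_ce. Qed.

Lemma map_hom_nth_ce k n (ys : k.-tuple A) :
  map_tuple f [tuple nth (ce A i) ys i | i < n] =
  [tuple nth (ce B i) (map_tuple f ys) i | i < n].
Proof.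
apply: eq_from_tnth => i; rewrite tnth_map !tnth_mktuple.
have [lt_ik | le_ki] := ltnP i k; first by rewrite (nth_map (ce A i)) ?size_tuple.
by rewrite !nth_tuple_default ?hom_ce.
Qed.

Lemma map_hom_cq m n (ys : m.-tuple A) (zs : n.-tuple A) :
  map_tuple f (map_tuple (fun y => cq n y zs) ys) =
  map_tuple (fun y => cq n y (map_tuple f zs)) (map_tuple f ys).
Proof. by apply: eq_from_tnth => i; rewrite !tnth_map hom_cq. Qed.

End CloneHom.

Section CAClosure.
Variable t : alg_type.

Lemma CA_jointly_injective (B : algebra (clone_type t)) (I : Type)
    (A : I -> algebra (clone_type t)) (f : forall i, B -> A i) :
  (forall i, is_hom (f i)) -> (forall i, CA (A i)) ->
  (forall x y, (forall i, f i x = f i y) -> x = y) -> CA B.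
Proof.
move=> hom_f CA_A f_sep; split; [|split; [|split; [|split; [|split]]]].
- move=> n xs j; apply: f_sep => i; have [C1 _] := CA_A i.
  by rewrite (hom_cq (hom_f i)) (hom_ce (hom_f i)) C1 tnth_map.
- move=> n xs j le_nj; apply: f_sep => i; have [_ [C2 _]] := CA_A i.
  by rewrite (hom_cq (hom_f i)) (hom_ce (hom_f i)) C2.
- move=> n x; apply: f_sep => i; have [_ [_ [C3 _]]] := CA_A i.
  by rewrite (hom_cq (hom_f i)) (map_hom_ce (hom_f i)) C3.
- move=> k n x ys lt_kn; apply: f_sep => i; have [_ [_ [_ [C4 _]]]] := CA_A i.
  by rewrite !(hom_cq (hom_f i)) (map_hom_nth_ce (hom_f i)) (C4 _ n).
- move=> n x ys zs; apply: f_sep => i; have [_ [_ [_ [_ [C5 _]]]]] := CA_A i.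
  by rewrite !(hom_cq (hom_f i)) (map_hom_cq (hom_f i)) C5.
- move=> s xs n ys; apply: f_sep => i; have [_ [_ [_ [_ [_ C6]]]]] := CA_A i.
  by rewrite (hom_cq (hom_f i)) !(hom_cop (hom_f i)) (map_hom_cq (hom_f i)) C6.
Qed.

Lemma CA_injective (A B : algebra (clone_type t)) (f : B -> A) :
  is_hom f -> injective f -> CA A -> CA B.
Proof.
move=> hom_f f_inj CA_A.
by apply: (@CA_jointly_injective B unit (fun _ => A) (fun _ => f)) => // x y /(_ tt)/f_inj.
Qed.

Lemma CA_prod (I : Type) (A : I -> algebra (clone_type t)) :
  (forall i, CA (A i)) -> CA (prod_alg A).
Proof.
move=> CA_A; apply: (@CA_jointly_injective _ I A (fun i (x : prod_alg A) => x i)) => // x y.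
exact: functional_extensionality_dep.
Qed.

Lemma CA_surjective (A B : algebra (clone_type t)) (f : A -> B) :
  is_hom f -> (forall b, exists a, f a = b) -> CA A -> CA B.
Proof.
move=> hom_f f_surj [C1 [C2 [C3 [C4 [C5 C6]]]]].
have lift := surj_map_tuple f_surj.
split; [|split; [|split; [|split; [|split]]]].
- move=> n xs j; have [ys ->] := lift _ xs.
  by rewrite -(hom_ce hom_f) -(hom_cq hom_f) C1 tnth_map.
- move=> n xs j le_nj; have [ys ->] := lift _ xs.
  by rewrite -(hom_ce hom_f) -(hom_cq hom_f) C2.
- move=> n x; have [y <-] := f_surj x.
  by rewrite -(map_hom_ce hom_f) -(hom_cq hom_f) C3.
- move=> k n x ys lt_kn; have [y <-] := f_surj x; have [ys' ->] := lift _ ys.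
  by rewrite -(map_hom_nth_ce hom_f) -!(hom_cq hom_f) (C4 _ n).
- move=> n x ys zs; have [y <-] := f_surj x.
  have [ys' ->] := lift _ ys; have [zs' ->] := lift _ zs.
  by rewrite -(map_hom_cq hom_f) -!(hom_cq hom_f) C5.
- move=> s xs n ys; have [xs' ->] := lift _ xs; have [ys' ->] := lift _ ys.
  by rewrite -(map_hom_cq hom_f) -(hom_cop hom_f) -(hom_cq hom_f) -(hom_cop hom_f) C6.
Qed.

Lemma CA_Icl (K : alg_class (clone_type t)) (C : algebra (clone_type t)) :
  (forall A, K A -> CA A) -> Icl K C -> CA C.
Proof.
move=> K_CA [A [KA [f [hom_f [g _ gK]]]]].
by apply: CA_surjective hom_f _ (K_CA _ KA) => b; exists (g b).
Qed.

Lemma CA_HSP (K : alg_class (clone_type t)) (C : algebra (clone_type t)) :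
  (forall A, K A -> CA A) -> Hcl (Scl (Pcl K)) C -> CA C.
Proof.
move=> K_CA [B [[P [[I [A [KA [g [hom_g [g' _ g'K]]]]]] [f [hom_f f_inj]]]] [h [hom_h h_surj]]]].
apply: CA_surjective hom_h h_surj _; apply: CA_injective hom_f f_inj _.
apply: CA_surjective hom_g (fun b => ex_intro _ (g' b) (g'K b)) _.
by apply: CA_prod => i; apply: K_CA.
Qed.

End CAClosure.

Section FunctionalCloneAlgebra.
Variables (t : alg_type) (A : algebra t) (D : (nat -> A) -> Prop).
Hypothesis D_upd : forall s n (xs : n.-tuple A), D s -> D (upd s xs).
Notation F := (fun_alg D_upd).
Notation point := {s | D s}.

Definition point_upd (s : point) n (xs : n.-tuple A) : point :=
  exist D (upd (proj1_sig s) xs) (D_upd xs (proj2_sig s)).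

Lemma fun_alg_cq n (f : F) (gs : n.-tuple F) s :
  (cq n f gs : point -> A) s =
  (f : point -> A) (point_upd s (map_tuple (fun g : F => (g : point -> A) s) gs)).
Proof. by congr f; apply: proj1_sig_inj. Qed.

Lemma fun_alg_cop sg (fs : (arity sg).-tuple F) s :
  (cop sg fs : point -> A) s = interp A sg (map_tuple (fun g : F => (g : point -> A) s) fs).
Proof. by []. Qed.

Lemma CA_fun_alg : CA F.
Proof.
split; [|split; [|split; [|split; [|split]]]].
- move=> n xs j; apply: functional_extensionality => s.
  by rewrite fun_alg_cq /= /upd (nth_map (ce F 0)) ?size_tuple // -tnth_nth.
- move=> n xs j le_nj; apply: functional_extensionality => s.
  by rewrite fun_alg_cq /= /upd nth_default // size_map size_tuple.
- move=> n x; apply: functional_extensionality => s.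
  rewrite fun_alg_cq; congr x; apply: proj1_sig_inj => /=.
  apply: functional_extensionality => k; rewrite /upd.
  have [lt_kn | le_nk] := ltnP k n; last by rewrite nth_default // size_map size_tuple.
  by rewrite (nth_map (ce F 0)) ?size_tuple // (nth_mktuple _ _ lt_kn).
- move=> k n x ys lt_kn; apply: functional_extensionality => s.
  rewrite !fun_alg_cq; congr x; apply: proj1_sig_inj => /=.
  apply: functional_extensionality => j; rewrite /upd.
  have [lt_jn | le_nj] := ltnP j n; last first.
    by rewrite !nth_tuple_default // (leq_trans (ltnW lt_kn)).
  rewrite [in RHS](nth_map (ce F 0)) ?size_tuple // (nth_mktuple _ _ lt_jn) /=.
  have [lt_jk | le_kj] := ltnP j k; last by rewrite !nth_default ?size_map ?size_tuple.
  by rewrite (nth_map (ce F 0)) ?size_tuple // (set_nth_default (ce F 0)) ?size_tuple.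
- move=> n x ys zs; apply: functional_extensionality => s.
  rewrite !fun_alg_cq; congr x; apply: proj1_sig_inj => /=.
  apply: functional_extensionality => j; rewrite /upd.
  have [lt_jn | le_nj] := ltnP j n; last by rewrite !nth_tuple_default.
  rewrite !(nth_map (ce F 0)) ?size_map ?size_tuple //.
  by congr (nth (ce F 0) ys j _); apply: proj1_sig_inj.
- move=> sg xs n ys; apply: functional_extensionality => s.
  rewrite fun_alg_cq !fun_alg_cop; congr (interp A sg _).
  by apply: eq_from_tnth => i; rewrite !tnth_map fun_alg_cq.
Qed.

End FunctionalCloneAlgebra.

Lemma CA_FCA t (B : algebra (clone_type t)) : FCA B -> CA B.
Proof. by case=> A [f [hom_f f_inj]]; apply: CA_injective hom_f f_inj (CA_fun_alg _). Qed.

Lemma CA_RCA t (B : algebra (clone_type t)) : RCA B -> CA B.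
Proof. by case=> A [r [f [hom_f f_inj]]]; apply: CA_injective hom_f f_inj (CA_fun_alg _). Qed.

Lemma CA_BLK t (B : algebra (clone_type t)) : BLK B -> CA B.
Proof. by case=> A [f [hom_f [f_inj _]]]; apply: CA_FCA; exists A, f. Qed.

Definition restrict_rca t (A : algebra t) (r : nat -> A) (f : full_fca A) : full_rca A r :=
  fun s => (f : {s | True} -> A) (exist _ (proj1_sig s) I).
Arguments restrict_rca {t A} r f.

Lemma restrict_rca_hom t (A : algebra t) (r : nat -> A) : is_hom (@restrict_rca t A r).
Proof.
move=> [sg|[n|k]] fs; apply: functional_extensionality => s //=.
  by congr (interp A sg _); apply: eq_from_tnth => i; rewrite !tnth_map.
case/tupleP: fs => f gs.
have -> : map_tuple (@restrict_rca t A r) [tuple of f :: gs] =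
          [tuple of restrict_rca r f :: map_tuple (@restrict_rca t A r) gs] by apply: val_inj.
change ((cq n f gs : {s | True} -> A) (exist _ (proj1_sig s) I) =
  (cq n (restrict_rca r f) (map_tuple (@restrict_rca t A r) gs) : {s | rel_dom r s} -> A) s).
rewrite !fun_alg_cq /restrict_rca; congr f; apply: proj1_sig_inj => /=; congr upd.
by apply: eq_from_tnth => i; rewrite !tnth_map.
Qed.

Lemma cq_cq_widen t (C : algebra (clone_type t)) n N (a : C) (bs : n.-tuple C) (u : N.-tuple C) :
  CA C -> n < N ->
  cq N (cq n a bs) u =
  cq N a [tuple (if i < n then cq N (nth a bs i) u else tnth u i) | i < N].
Proof.
case=> C1 [_ [_ [C4 [C5 _]]]] lt_nN.
rewrite (C4 n N) // C5; congr cq; apply: eq_from_tnth => i.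
rewrite tnth_map !tnth_mktuple; case: ifP => lt_in.
  by rewrite (set_nth_default a) ?size_tuple.
by rewrite nth_default ?C1 // size_tuple leqNgt lt_in.
Qed.

Section GermRepresentation.
Variables (t : alg_type) (C : algebra (clone_type t)).
Hypothesis CA_C : CA C.

Definition germ_eq (x y : nat -> C) := eventually (fun k => x k = y k).

Lemma germ_eq_refl x : germ_eq x x.
Proof. by exists 0. Qed.

Lemma germ_eq_sym x y : germ_eq x y -> germ_eq y x.
Proof. exact: eventually_mono. Qed.

Lemma germ_eq_trans x y z : germ_eq x y -> germ_eq y z -> germ_eq x z.
Proof. by move=> xy yz; apply: eventually_mono (eventually_and xy yz) => k [-> ->]. Qed.

(* A constant representative is chosen whenever there is one, so that the germ
   of [e_i] is represented by the constant sequence [e_i] itself: the slices of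
   the thread are then exactly, not just eventually, [e_1, ..., e_j]. *)
Definition class_rep (P : (nat -> C) -> Prop) : nat -> C :=
  match excluded_middle_informative (exists c, P (fun _ => c)) with
  | left _ => fun _ => epsilon (inhabits (ce C 0)) (fun c => P (fun _ => c))
  | right _ => epsilon (inhabits (fun _ => ce C 0)) P
  end.

Definition germ_rep x := class_rep (germ_eq x).

Lemma germ_rep_eq x : germ_eq (germ_rep x) x.
Proof.
rewrite /germ_rep /class_rep; case: excluded_middle_informative => [const_x|_].
  exact/germ_eq_sym/(epsilon_spec (inhabits (ce C 0)) _ const_x).
exact/germ_eq_sym/(epsilon_spec (inhabits _) _ (ex_intro _ x (germ_eq_refl x))).
Qed.

Lemma germ_rep_congr x y : germ_eq x y -> germ_rep x = germ_rep y.
Proof.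
move=> xy; rewrite /germ_rep; congr class_rep.
apply: functional_extensionality => z; apply: propositional_extensionality.
by split; [apply: germ_eq_trans (germ_eq_sym xy) | apply: germ_eq_trans xy].
Qed.

Lemma germ_rep_const c : germ_rep (fun _ => c) = fun _ => c.
Proof.
rewrite /germ_rep /class_rep; case: excluded_middle_informative => [const_c|not_const].
  have [N eqN] :=
    epsilon_spec (inhabits (ce C 0)) (fun c' => germ_eq (fun _ => c) (fun _ => c')) const_c.
  by apply: functional_extensionality => _; rewrite -(eqN N (leqnn N)).
by case: not_const; exists c; apply: germ_eq_refl.
Qed.

Definition germ := {x : nat -> C | germ_rep x = x}.

Definition germ_of (x : nat -> C) : germ :=
  exist _ (germ_rep x) (germ_rep_congr (germ_rep_eq x)).

Lemma germ_of_val (g : germ) : germ_of (proj1_sig g) = g.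
Proof. by apply: proj1_sig_inj; apply: (proj2_sig g). Qed.

Lemma germ_of_congr x y : germ_eq x y -> germ_of x = germ_of y.
Proof. by move=> xy; apply: proj1_sig_inj; apply: germ_rep_congr. Qed.

Lemma germ_of_const_inj a b : germ_of (fun _ => a) = germ_of (fun _ => b) -> a = b.
Proof. by move/(congr1 (fun g : germ => proj1_sig g 0)); rewrite /= !germ_rep_const. Qed.

Definition germ_alg : algebra t :=
  @Algebra t germ
    (fun sg gs => germ_of (fun j => cop sg (map_tuple (fun g : germ => proj1_sig g j) gs))).

Notation point := {s : nat -> germ_alg | True}.

Definition slice (s : point) j : j.-tuple C :=
  [tuple proj1_sig (proj1_sig s i : germ) j | i < j].

Definition germ_embed (a : C) : full_fca germ_alg :=
  fun s => germ_of (fun j => cq j a (slice s j)).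

Lemma germ_embed_eq a s :
  germ_eq (proj1_sig ((germ_embed a : point -> germ_alg) s : germ)) (fun j => cq j a (slice s j)).
Proof. exact: germ_rep_eq. Qed.

Lemma germ_embed_hom : is_hom germ_embed.
Proof.
have [C1 [_ [_ [_ [_ C6]]]]] := CA_C.
move=> [sg|[n|k]] as_; apply: functional_extensionality => s.
- apply: germ_of_congr; rewrite -/(cop sg as_).
  apply: eventually_mono (eventually_forall (fun i => germ_embed_eq (tnth as_ i) s)) => j eq_j.
  by rewrite C6; congr cop; apply: eq_from_tnth => i; rewrite !tnth_map eq_j.
- case/tupleP: as_ => a bs.
  have -> : map_tuple germ_embed [tuple of a :: bs] =
            [tuple of germ_embed a :: map_tuple germ_embed bs].
    exact: val_inj.
  change ((germ_embed (cq n a bs) : point -> germ_alg) s =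
          (cq n (germ_embed a) (map_tuple germ_embed bs) : point -> germ_alg) s).
  rewrite fun_alg_cq; apply: germ_of_congr.
  have eq_bs := eventually_forall (fun i => germ_embed_eq (tnth bs i) s).
  apply: eventually_mono (eventually_and eq_bs (eventually_ge n.+1)) => j [eq_j lt_nj].
  rewrite cq_cq_widen //; congr cq; apply: eq_from_tnth => i.
  rewrite !tnth_mktuple /= /upd.
  case: ifP => lt_in; last by rewrite nth_tuple_default // leqNgt lt_in.
  rewrite (nth_map (germ_embed a)) ?size_map ?size_tuple // (nth_map a) ?size_tuple //.
  by have := eq_j (Ordinal lt_in); rewrite (tnth_nth a) /= => ->.
- rewrite (tuple0 as_) -[RHS]germ_of_val; apply: germ_of_congr.
  by exists k.+1 => j lt_kj; rewrite (C1 _ _ (Ordinal lt_kj)) tnth_mktuple.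
Qed.

Definition germ_thread : nat -> germ_alg := fun i => germ_of (fun _ => ce C i).

Lemma germ_embed_thread a (s : point) :
  proj1_sig s = germ_thread -> (germ_embed a : point -> germ_alg) s = germ_of (fun _ => a).
Proof.
have [_ [_ [C3 _]]] := CA_C.
move=> s_thread; congr germ_of; apply: functional_extensionality => j.
have -> : slice s j = [tuple ce C i | i < j].
  by apply: eq_from_tnth => i; rewrite !tnth_mktuple s_thread /= germ_rep_const.
by rewrite C3.
Qed.

Lemma germ_embed_inj : injective germ_embed.
Proof.
move=> a b /(congr1 (fun f : full_fca germ_alg => (f : point -> germ_alg) (exist _ germ_thread I))).
by rewrite !germ_embed_thread //; apply: germ_of_const_inj.
Qed.

Lemma FCA_of_CA : FCA C.
Proof. by exists germ_alg, germ_embed; split; [apply: germ_embed_hom | apply: germ_embed_inj]. Qed.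

Lemma RCA_of_CA : RCA C.
Proof.
exists germ_alg, germ_thread, (fun a => restrict_rca germ_thread (germ_embed a)).
split; first exact: comp_hom germ_embed_hom (restrict_rca_hom _).
move=> a b /(congr1 (fun f : full_rca germ_alg germ_thread =>
                (f : {s | rel_dom germ_thread s} -> germ_alg)
                  (exist _ germ_thread (ex_intro _ 0 (fun _ _ => erefl))))).
by rewrite /restrict_rca !germ_embed_thread //; apply: germ_of_const_inj.
Qed.

End GermRepresentation.

Section FinitaryFunctions.
Variables (t : alg_type) (A : algebra t).
Notation F := (full_fca A).
Notation point := {s : nat -> A | True}.

Definition depends_below (f : F) n := forall s s' : point,
  (forall i, i < n -> proj1_sig s i = proj1_sig s' i) -> (f : point -> A) s = (f : point -> A) s'.

Lemma depends_below_mono (f : F) n m : n <= m -> depends_below f n -> depends_below f m.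
Proof. by move=> le_nm f_n s s' eq_s; apply: f_n => i lt_in; apply/eq_s/(leq_trans lt_in). Qed.

Definition finitary (f : F) := eventually (depends_below f).

Lemma finitary_closed o (fs : (arity o).-tuple F) :
  (forall i, finitary (tnth fs i)) -> finitary (interp F o fs).
Proof.
move=> fin_fs; have {fin_fs}fin_fs := eventually_forall fin_fs.
case: o fs fin_fs => [sg|[n|k]] fs fin_fs.
- apply: eventually_mono fin_fs => k dep_fs s s' eq_s /=; congr (interp A sg _).
  by apply: eq_from_tnth => i; rewrite !tnth_map; apply: dep_fs.
- move: fs fin_fs; case/tupleP => f gs fin_fs.
  apply: eventually_mono (eventually_and fin_fs (eventually_ge n)) => k [dep_fs le_nk s s' eq_s].
  change ((cq n f gs : point -> A) s = (cq n f gs : point -> A) s').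
  have eq_gs : map_tuple (fun g : F => (g : point -> A) s) gs =
               map_tuple (fun g : F => (g : point -> A) s') gs.
    apply: eq_from_tnth => j; rewrite !tnth_map.
    by have := dep_fs (lift ord0 j); rewrite tnthS; apply.
  rewrite !fun_alg_cq eq_gs; apply: (dep_fs ord0) => i lt_ik /=; rewrite /upd.
  have [lt_in | le_ni] := ltnP i n; first by rewrite (set_nth_default (proj1_sig s' i)) ?size_tuple.
  by rewrite !nth_tuple_default // eq_s.
- by exists k.+1 => j lt_kj s s' eq_s /=; apply/eq_s/(leq_trans _ lt_kj).
Qed.

Definition finitary_alg := sub_alg finitary_closed.

Definition finitary_val (f : finitary_alg) : F := proj1_sig f.

Lemma finitary_val_hom : is_hom finitary_val.
Proof. exact: sub_alg_val_hom. Qed.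

Lemma finitary_val_inj : injective finitary_val.
Proof. exact: proj1_sig_inj. Qed.

Lemma FiCA_finitary_alg : FiCA finitary_alg.
Proof.
split; first exact: CA_injective finitary_val_hom finitary_val_inj (CA_fun_alg _).
move=> f; have [N dep_f] := proj2_sig f; exists N => k le_Nk.
apply: finitary_val_inj; rewrite (hom_cq finitary_val_hom).
apply: functional_extensionality => s; rewrite fun_alg_cq.
apply: (dep_f k le_Nk) => i lt_ik /=; rewrite /upd.
have lt_iSk : i < k.+1 := ltnW lt_ik.
rewrite (nth_map (ce F 0)) ?size_tuple // (nth_map (ce finitary_alg 0)) ?size_tuple //.
by rewrite (nth_mktuple _ _ lt_iSk) /= lt_ik.
Qed.

Lemma BLK_finitary_alg : BLK finitary_alg.
Proof.
exists A, finitary_val; split; first exact: finitary_val_hom.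
split; first exact: finitary_val_inj.
move=> f; have [N dep_f] := proj2_sig f.
exists N.+1, (fun xs => (finitary_val f : point -> A) (exist _ (fun i => nth (thead xs) xs i) I)).
move=> s.
by apply: (dep_f N.+1 (leqnSn N)) => i lt_iN /=; rewrite (nth_mktuple _ _ lt_iN).
Qed.

End FinitaryFunctions.

Definition reduct t (C : algebra (clone_type t)) : algebra t := @Algebra t C (@cop t C).

Section Approximation.
Variables (t : alg_type) (C : algebra (clone_type t)).
Hypothesis CA_C : CA C.
Notation F := (full_fca (reduct C)).
Notation Fin := (finitary_alg (reduct C)).
Notation point := {s : nat -> C | True}.

Definition approx (a : C) N : F := fun s => cq N a [tuple proj1_sig s i | i < N].

Lemma approx_depends_below a N : depends_below (approx a N) N.
Proof.
move=> s s' eq_s; rewrite /approx; congr cq.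
by apply: eq_from_tnth => i; rewrite !tnth_mktuple eq_s.
Qed.

Definition approx_fin (a : C) N : Fin :=
  exist _ (approx a N)
    (ex_intro _ N (fun k le_Nk => depends_below_mono le_Nk (@approx_depends_below a N))).

Lemma approx_fin_inj N : injective (approx_fin^~ N).
Proof.
have [_ [_ [C3 _]]] := CA_C.
move=> a b /(congr1 (fun f : Fin => (finitary_val f : point -> C) (exist _ (fun i => ce C i) I))).
by rewrite /= /approx /= !C3.
Qed.

Lemma approx_fin_hom_eventually o (as_ : (arity o).-tuple C) :
  eventually (fun N =>
    interp Fin o (map_tuple (approx_fin^~ N) as_) = approx_fin (interp C o as_) N).
Proof.
have [C1 [_ [_ [_ [_ C6]]]]] := CA_C.
case: o as_ => [sg|[n|k]] as_.
- exists 0 => N _; apply: finitary_val_inj; apply: functional_extensionality => s.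
  rewrite (hom_cop (@finitary_val_hom _ _)) fun_alg_cop /= /approx -/(cop sg as_) C6.
  by congr cop; apply: eq_from_tnth => i; rewrite !tnth_map.
- case/tupleP: as_ => a bs.
  exists n.+1 => N lt_nN; apply: finitary_val_inj; apply: functional_extensionality => s.
  have -> : map_tuple (approx_fin^~ N) [tuple of a :: bs] =
            [tuple of approx_fin a N :: map_tuple (approx_fin^~ N) bs] by apply: val_inj.
  rewrite -/(cq n _ _) (hom_cq (@finitary_val_hom _ _)) fun_alg_cq /= /approx -/(cq n a bs).
  rewrite cq_cq_widen //; congr cq; apply: eq_from_tnth => i; rewrite !tnth_mktuple /= /upd.
  case: ifP => lt_in; last by rewrite nth_tuple_default // leqNgt lt_in.
  rewrite (nth_map (ce F 0)) ?size_tuple // (nth_map (ce Fin 0)) ?size_tuple //.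
  by rewrite (nth_map a) ?size_tuple.
- exists k.+1 => N lt_kN; apply: finitary_val_inj; apply: functional_extensionality => s.
  rewrite (tuple0 as_) /= /approx -/(ce C k).
  by rewrite (C1 _ _ (Ordinal lt_kN)) tnth_mktuple.
Qed.

Notation seq_alg := (prod_alg (fun _ : nat => Fin)).

Definition approximates (x : seq_alg) (a : C) := eventually (fun N => x N = approx_fin a N).

Lemma approximates_interp o (xs : (arity o).-tuple seq_alg) (as_ : (arity o).-tuple C) :
  (forall i, approximates (tnth xs i) (tnth as_ i)) ->
  approximates (interp seq_alg o xs) (interp C o as_).
Proof.
move=> xs_as; have {xs_as}xs_as := eventually_forall xs_as.
apply: eventually_mono (eventually_and xs_as (approx_fin_hom_eventually as_)) => N [eq_N <-] /=.
by congr (interp Fin o _); apply: eq_from_tnth => i; rewrite !tnth_map eq_N.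
Qed.

Lemma approximates_unique x a b : approximates x a -> approximates x b -> a = b.
Proof.
move=> x_a x_b; have [N /(_ N (leqnn N))[eq_a eq_b]] := eventually_and x_a x_b.
by apply: (@approx_fin_inj N); rewrite /= -eq_a -eq_b.
Qed.

Definition approximable (x : seq_alg) := exists a, approximates x a.

Lemma approximable_closed o (xs : (arity o).-tuple seq_alg) :
  (forall i, approximable (tnth xs i)) -> approximable (interp seq_alg o xs).
Proof.
move=> xs_lim; pose lim i := sval (constructive_indefinite_description _ (xs_lim i)).
exists (interp C o [tuple lim i | i < arity o]); apply: approximates_interp => i.
by rewrite tnth_mktuple /lim; case: constructive_indefinite_description.
Qed.

Definition approximable_alg := sub_alg approximable_closed.

Definition limit (x : approximable_alg) : C :=
  sval (constructive_indefinite_description _ (proj2_sig x)).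

Lemma limitP x : approximates (proj1_sig x) (limit x).
Proof. by rewrite /limit; case: constructive_indefinite_description. Qed.

Lemma limit_hom : is_hom limit.
Proof.
move=> o xs; apply: approximates_unique (limitP _) _.
by apply: approximates_interp => i; rewrite !tnth_map; apply: limitP.
Qed.

Lemma limit_surj a : exists x, limit x = a.
Proof.
have approx_a : approximable (fun N => approx_fin a N) by exists a, 0.
by exists (exist _ _ approx_a); apply: approximates_unique (limitP _) _; exists 0.
Qed.

Lemma HSP_finitary_alg (K : alg_class (clone_type t)) : K Fin -> Hcl (Scl (Pcl K)) C.
Proof.
move=> K_Fin; exists approximable_alg; split; last first.
  by exists limit; split; [apply: limit_hom | apply: limit_surj].
exists seq_alg; split.
  by exists nat, (fun _ => Fin); split=> //; exists id; split; [apply: id_hom | exists id].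
exists (fun x : approximable_alg => proj1_sig x).
by split; [apply: sub_alg_val_hom | apply: proj1_sig_inj].
Qed.

End Approximation.

Lemma Icl_refl T (K : alg_class T) (A : algebra T) : K A -> Icl K A.
Proof. by move=> KA; exists A; split=> //; exists id; split; [apply: id_hom | exists id]. Qed.

Theorem theorem9p5 (t : alg_type) (C : algebra (clone_type t)) :
  (CA C <-> Icl (@RCA t) C) /\
  (CA C <-> Icl (@FCA t) C) /\
  (CA C <-> Hcl (Scl (Pcl (@FiCA t))) C) /\
  (CA C <-> Hcl (Scl (Pcl (@BLK t))) C).
Proof.
have CA_FiCA (A : algebra (clone_type t)) : FiCA A -> CA A by case.
split; [|split; [|split]]; split.
- by move=> CA_C; apply/Icl_refl/RCA_of_CA.
- exact: CA_Icl (@CA_RCA t).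
- by move=> CA_C; apply/Icl_refl/FCA_of_CA.
- exact: CA_Icl (@CA_FCA t).
- by move=> CA_C; apply: (HSP_finitary_alg CA_C); apply: FiCA_finitary_alg.
- exact: CA_HSP CA_FiCA.
- by move=> CA_C; apply: (HSP_finitary_alg CA_C); apply: BLK_finitary_alg.
- exact: CA_HSP (@CA_BLK t).
Qed.
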